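(* Let $x:[p]\to[r]$ be a strictly increasing set map. Then there exists a unique decomposition of $x$ as $[p]\xrightarrow{\mu}[p']\xrightarrow{\phi}[q]\xrightarrow{\psi}[r]$ such that $\phi$ is non-twisted, $\psi\in\square$, and $\mu=(g_1,\dots,g_{p'})$ where the $g_i:[p]\to[1]$ are non-constant and mutually distinct (i.e. $g_i=g_j$ implies $i=j$). Moreover $p\le p'$, $\mu$ is strictly increasing, and $\mu$ is adjacency-preserving if and only if $p=p'$.
   Context: $[0]=\{()\}$, $[n]=\{0,1\}^n$ ($n\ge1$) with the product order. Face maps $\delta_i^\alpha:[n-1]\to[n]$ insert $\alpha\in\{0,1\}$ at position $i$; $\square$ is the category with objects $[n]$, $n\ge0$, generated by the face maps. A map is adjacency-preserving if strictly increasing and it sends pairs at Hamming distance $1$ to pairs at Hamming distance $1$. A map $\phi:[p']\to[q]$ is non-twisted if it is of the form $(\epsilon_1,\dots,\epsilon_{p'})\mapsto(\epsilon_{i_1},\dots,\epsilon_{i_q})$ with $\{1,\dots,p'\}\subset\{i_1,\dots,i_q\}$ and such that, reading from left to right, the first appearance of $\epsilon_i$ is before the first appearance of $\epsilon_{i+1}$ for every $i$. A map $[p]\to[p']$ is written $(g_1,\dots,g_{p'})$ in terms of its coordinate functions $g_i:[p]\to[1]=\{0,1\}$. *)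

From mathcomp Require Import all_boot all_order.
Set Implicit Arguments. Unset Strict Implicit. Unset Printing Implicit Defensive.

(* [n] = {0,1}^n, coordinates indexed by 'I_n (so [0] is a one-point set). *)
Definition cube (n : nat) : finType := {ffun 'I_n -> bool}.

(* Set maps [m] -> [n], as finite functions (so Leibniz equality = extensional). *)
Definition cmap (m n : nat) := {ffun cube m -> cube n}.

Definition cle n (a b : cube n) : bool := [forall i, a i ==> b i].
Definition clt n (a b : cube n) : bool := cle a b && (a != b).

Definition strict_incr m n (f : cube m -> cube n) : Prop :=
  forall a b, clt a b -> clt (f a) (f b).

Definition hdist n (a b : cube n) : nat := #|[set i | a i != b i]|.

Definition adjacency_preserving m n (f : cube m -> cube n) : Prop :=
  strict_incr f /\ forall a b, hdist a b = 1 -> hdist (f a) (f b) = 1.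

(* face map delta_i^alpha : [n] -> [n+1], inserting alpha at position i
   (0-based position i : 'I_(n+1)) *)
Definition face n (i : 'I_n.+1) (alpha : bool) (x : cube n) : cube n.+1 :=
  [ffun j : 'I_n.+1 => match unlift i j with None => alpha | Some j' => x j' end].

(* the maps of the category "box" generated by the face maps (including identities),
   up to pointwise equality of set maps *)
Inductive box_map : forall q r : nat, (cube q -> cube r) -> Prop :=
  | box_id q : box_map (fun x : cube q => x)
  | box_face q r (f : cube q -> cube r) (i : 'I_r.+1) (alpha : bool) :
      box_map f -> box_map (fun x => face i alpha (f x))
  | box_ext q r (f g : cube q -> cube r) :
      box_map f -> (forall x, g x = f x) -> box_map g.

(* phi : [p'] -> [q] is non-twisted: phi eps = (eps_{s 0}, ..., eps_{s (q-1)})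
   where every index of [p'] occurs among the s k, and first appearances
   occur in increasing order. *)
Definition non_twisted p' q (phi : cube p' -> cube q) : Prop :=
  exists s : 'I_q -> 'I_p',
    [/\ forall x, phi x = [ffun k => x (s k)],
        forall i : 'I_p', i \in codom s &
        forall i j : 'I_p', val j = (val i).+1 ->
           index i (codom s) < index j (codom s)].

Definition good_mu p p' (mu : cube p -> cube p') : Prop :=
  (forall i : 'I_p', exists a b, mu a i != mu b i) /\
  (forall i j : 'I_p', (forall a, mu a i = mu a j) -> i = j).

Definition decomposition p r := {p' : nat & {q : nat & (cmap p p' * cmap p' q * cmap q r)%type}}.

Definition is_decomposition p r (x : cube p -> cube r) (d : decomposition p r) : Prop :=
  match d with
  | existT p' (existT q (mu, phi, psi)) =>
      [/\ forall a, x a = psi (phi (mu a)),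
          non_twisted (fun y => phi y),
          box_map (fun y => psi y) &
          good_mu (fun y => mu y)]
  end.

Definition decomposition_extra p r (d : decomposition p r) : Prop :=
  match d with
  | existT p' (existT q (mu, phi, psi)) =>
      [/\ p <= p',
          strict_incr (fun y => mu y) &
          (adjacency_preserving (fun y => mu y) <-> p = p')]
  end.

From mathcomp Require Import all_boot all_order.
From mathcomp Require Import zify.
Set Implicit Arguments. Unset Strict Implicit. Unset Printing Implicit Defensive.

(* The decomposition of x is read off its coordinate functions x_k : [p] -> [1].
   A map of the box category only copies coordinates in increasing order and fills
   the others with constants, so psi must reinsert the constant coordinates of x and
   [q] indexes the non-constant ones.  Then mu must list the distinct non-constant
   coordinate functions of x, and non-twistedness forces them to appear in order of
   first appearance, which also pins down phi.  Since every coordinate of mu is a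
   non-constant coordinate of x, mu is strictly increasing and fixes the bottom and
   top vertices; strictly increasing maps do not shrink Hamming distances along
   chains, adjacency-preserving ones do not stretch them, and comparing the distance
   from bottom to top gives p <= p', with equality exactly when mu preserves
   adjacency. *)

Lemma sorted_ltn_enum r (A : {pred 'I_r}) : sorted (fun i j : 'I_r => i < j) (enum A).
Proof.
rewrite /enum_mem -enumT; apply: sorted_filter => [? ? ?|]; first exact: ltn_trans.
by have := iota_ltn_sorted 0 r; rewrite -val_enum_ord sorted_map.
Qed.

Lemma map_incr_enum q r (e : 'I_q -> 'I_r) :
  {homo e : i j / i < j} -> map e (enum 'I_q) = enum (codom e).
Proof.
move=> e_incr.
apply: (irr_sorted_eq (leT := fun i j : 'I_r => i < j)) => [? ? ?|?|||k].
- exact: ltn_trans.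
- exact: ltnn.
- rewrite sorted_map; apply: sub_sorted (sorted_ltn_enum 'I_q) => i j.
  exact: e_incr.
- exact: sorted_ltn_enum.
- by rewrite mem_enum codomE.
Qed.

Lemma incr_ord_inj q r (e : 'I_q -> 'I_r) : {homo e : i j / i < j} -> injective e.
Proof.
move=> e_incr i j eij; apply: val_inj; case: (ltngtP i j) => // ij.
- by have := e_incr _ _ ij; rewrite eij ltnn.
- by have := e_incr _ _ ij; rewrite eij ltnn.
Qed.

Lemma incr_ord_id n (e : 'I_n -> 'I_n) : {homo e : i j / i < j} -> e =1 id.
Proof.
move=> e_incr i; have := map_incr_enum e_incr.
rewrite (eq_enum (injF_onto (incr_ord_inj e_incr))) => /(congr1 (nth i ^~ i)).
by rewrite (nth_map i) ?size_enum_ord // !nth_ord_enum.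
Qed.

(* Maps of the box category are the coordinate embeddings: the source coordinates
   land at [e] in increasing order and the remaining coordinates are the constants [v]. *)
Definition box_normal_form q r (f : cube q -> cube r) (e : 'I_q -> 'I_r)
    (v : 'I_r -> bool) :=
  [/\ {homo e : i j / i < j},
      forall y j, f y (e j) = y j &
      forall y k, k \notin codom e -> f y k = v k].

Lemma bump_ltn h i j : (bump h i < bump h j) = (i < j).
Proof. by rewrite /bump; case: (leqP h i); case: (leqP h j) => /= ? ?; lia. Qed.

Lemma box_map_normal_form q r (f : cube q -> cube r) :
  box_map f -> exists e v, box_normal_form f e v.
Proof.
elim=> {q r f} [q | q r f i alpha _ [e [v [e_incr f_e f_v]]]
               | q r f g _ [e [v [e_incr f_e f_v]]] gf].
- exists id, (fun _ => false); split=> // y k.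
  by move/negP; case; apply: codom_f.
- exists (fun j => lift i (e j)), (fun k => if unlift i k is Some k' then v k' else alpha).
  split=> [a b ab | y j | y k k_out]; rewrite /face ?ffunE.
  + by rewrite /= bump_ltn e_incr.
  + by rewrite liftK f_e.
  + case: unliftP k_out => [k'|] -> // k_out; apply: f_v.
    by apply: contra k_out => /codomP [j ->]; apply: codom_f.
- by exists e, v; split=> // y *; rewrite gf ?f_e ?f_v.
Qed.

Lemma normal_form_box_map r q (f : cube q -> cube r) e v :
  box_normal_form f e v -> box_map f.
Proof.
elim: r q f e v => [|r IHr] q f e v [e_incr f_e f_v].
  case: q f e e_incr f_e f_v => [|q] f e; last by case: (e ord0).
  by move=> *; apply: (box_ext (box_id 0)) => y; apply/ffunP => -[m]; case: m.
have [e_onto | /forallPn [k k_out]] := boolP [forall k, k \in codom e].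
  have q_eq : q = r.+1.
    rewrite -[LHS]card_ord -(card_codom (incr_ord_inj e_incr)).
    by rewrite -[RHS]card_ord; apply: eq_card => k; rewrite (forallP e_onto).
  subst q; apply: (box_ext (box_id r.+1)) => y; apply/ffunP => k.
  by rewrite -{1}(incr_ord_id e_incr k) f_e.
have /fin_all_exists [e' e'E] : forall j, exists j', lift k j' = e j.
  move=> j; case: (unliftP k (e j)) => [j'|] ej; first by exists j'.
  by move: k_out; rewrite -ej codom_f.
pose f' y := [ffun j : 'I_r => f y (lift k j)].
have f'_box : box_map f'.
  apply: (IHr q f' e' (fun j => v (lift k j))); split=> [a b ab | y j | y j j_out].
  - by have := e_incr _ _ ab; rewrite -!e'E /= bump_ltn.
  - by rewrite ffunE e'E f_e.
  - rewrite ffunE f_v //; apply: contra j_out => /codomP [i].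
    by rewrite -e'E => /lift_inj ->; apply: codom_f.
apply: (box_ext (box_face k (v k) f'_box)) => y; apply/ffunP => z.
by rewrite /face ffunE; case: unliftP => [z'|] ->; [rewrite /f' ffunE | rewrite f_v].
Qed.

Definition weight n (a : cube n) := #|[set i | a i]|.

Lemma cleP n (a b : cube n) : reflect (forall i, a i -> b i) (cle a b).
Proof. by apply: (iffP forallP) => ab i; [apply/implyP | apply/implyP/ab]. Qed.

Lemma cle_refl n (a : cube n) : cle a a.
Proof. exact/cleP. Qed.

Lemma cle_trans n (a b c : cube n) : cle a b -> cle b c -> cle a c.
Proof. by move=> /cleP ab /cleP bc; apply/cleP => i /ab /bc. Qed.

Lemma hdistC n (a b : cube n) : hdist a b = hdist b a.
Proof. by apply: eq_card => i; rewrite !inE eq_sym. Qed.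

Lemma hdist_eq0 n (a b : cube n) : (hdist a b == 0) = (a == b).
Proof.
rewrite cards_eq0; apply/eqP/eqP => [ab | ->]; last by apply/setP => i; rewrite !inE eqxx.
by apply/ffunP => i; have := in_set0 i; rewrite -ab inE => /negbFE/eqP.
Qed.

Lemma weight_cle n (a b : cube n) : cle a b -> weight b = weight a + hdist a b.
Proof.
move=> /cleP ab; rewrite /weight /hdist -(cardsID [set i | a i] [set i | b i]).
congr (_ + _); apply: eq_card => i; rewrite !inE.
- by case: (boolP (a i)) => [/ab -> | ]; rewrite ?andbF.
- by case: (boolP (a i)) => [/ab -> | ] //=; case: (b i).
Qed.

Lemma hdist_chain n (a b c : cube n) :
  cle a b -> cle b c -> hdist a c = hdist a b + hdist b c.
Proof.
move=> ab bc; have := weight_cle (cle_trans ab bc).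
by rewrite (weight_cle bc) (weight_cle ab) -addnA => /addnI.
Qed.

Lemma hdist1_cle n (a b : cube n) : hdist a b = 1 -> cle a b \/ cle b a.
Proof.
move=> /eqP /cards1P [i abi].
have ab_off j : j != i -> a j = b j.
  move=> ji; have : j \notin [set i] by rewrite inE.
  by rewrite -abi inE negbK => /eqP.
case ai: (a i); [right | left]; apply/cleP => j.
all: by case: (eqVneq j i) => [-> | /ab_off ->]; rewrite ?ai.
Qed.

Lemma cle_step n (a b : cube n) : cle a b -> a != b ->
  exists2 c, cle a c & cle c b /\ hdist a c = 1.
Proof.
move=> /cleP ab; rewrite -hdist_eq0 -lt0n => /card_gt0P [i]; rewrite inE => abi.
have [ai bi] : a i = false /\ b i = true.
  by case: (a i) (b i) abi (ab i) => [] [] // _ /(_ isT).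
pose c := [ffun j => a j || (j == i)].
exists c; first by apply/cleP => j; rewrite ffunE => ->.
split; first by apply/cleP => j; rewrite ffunE => /orP [/ab | /eqP ->].
rewrite /hdist -(cards1 i); apply: eq_card => j; rewrite !inE ffunE.
by case: (eqVneq j i) => [-> | _]; rewrite ?ai ?orbF ?eqxx.
Qed.

Lemma strict_incr_cle m n (f : cube m -> cube n) :
  strict_incr f -> {homo f : a b / cle a b}.
Proof.
move=> f_incr a b ab; case: (eqVneq a b) => [-> | a_ne_b]; first exact: cle_refl.
by case/andP: (f_incr a b (introT andP (conj ab a_ne_b))).
Qed.

Lemma strict_incr_hdist m n (f : cube m -> cube n) a b :
  strict_incr f -> cle a b -> hdist a b <= hdist (f a) (f b).
Proof.
move=> f_incr; move hab : (hdist a b) => d; elim: d a hab => [// | d IHd] a hab ab.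
have [| c ac [cb ac1]] := cle_step ab; first by rewrite -hdist_eq0 hab.
have f_ac : 0 < hdist (f a) (f c).
  have ac_lt : clt a c by rewrite /clt ac -hdist_eq0 ac1.
  by have /andP [_] := f_incr a c ac_lt; rewrite lt0n hdist_eq0.
have cbd : hdist c b = d by move: hab; rewrite (hdist_chain ac cb) ac1 => -[].
have := IHd c cbd cb.
by rewrite (hdist_chain (strict_incr_cle f_incr ac) (strict_incr_cle f_incr cb)); lia.
Qed.

Lemma adjacency_preserving_hdist m n (f : cube m -> cube n) a b :
  adjacency_preserving f -> cle a b -> hdist (f a) (f b) <= hdist a b.
Proof.
move=> [f_incr f_adj]; move hab : (hdist a b) => d.
elim: d a hab => [| d IHd] a hab ab.
  by move/eqP: hab; rewrite hdist_eq0 => /eqP ->; rewrite leqn0 hdist_eq0.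
have [| c ac [cb ac1]] := cle_step ab; first by rewrite -hdist_eq0 hab.
have cbd : hdist c b = d by move: hab; rewrite (hdist_chain ac cb) ac1 => -[].
have := IHd c cbd cb.
rewrite (hdist_chain (strict_incr_cle f_incr ac) (strict_incr_cle f_incr cb)).
by rewrite (f_adj _ _ ac1).
Qed.

Definition cbot n : cube n := [ffun => false].
Definition ctop n : cube n := [ffun => true].

Lemma cle_bot n (a : cube n) : cle (cbot n) a.
Proof. by apply/cleP => i; rewrite ffunE. Qed.

Lemma cle_top n (a : cube n) : cle a (ctop n).
Proof. by apply/cleP => i; rewrite ffunE. Qed.

Lemma hdist_bot_top n : hdist (cbot n) (ctop n) = n.
Proof. by rewrite -[RHS]card_ord -cardsT; apply: eq_card => i; rewrite !inE !ffunE. Qed.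

Lemma nonconst_mono_bot_top m n (f : cube m -> cube n) :
  {homo f : a b / cle a b} -> (forall i, exists a b, f a i != f b i) ->
  f (cbot m) = cbot n /\ f (ctop m) = ctop n.
Proof.
move=> f_mono f_nonconst; split; apply/ffunP => i; rewrite ffunE.
all: have [a [b fab]] := f_nonconst i.
- have /cleP bot_a := f_mono _ _ (cle_bot a); have /cleP bot_b := f_mono _ _ (cle_bot b).
  by apply/negbTE/negP => bot_i; move: fab; rewrite (bot_a i bot_i) (bot_b i bot_i).
- have /cleP top_a := f_mono _ _ (cle_top a); have /cleP top_b := f_mono _ _ (cle_top b).
  apply/negPn/negP => top_i; move: fab.
  by rewrite (contraNF (top_a i) top_i) (contraNF (top_b i) top_i).
Qed.

Section BotTopPreserving.
Variables (n : nat) (f : cube n -> cube n).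
Hypotheses (f_incr : strict_incr f).
Hypotheses (f_bot : f (cbot n) = cbot n) (f_top : f (ctop n) = ctop n).

Lemma bot_top_preserving_hdist a b : cle a b -> hdist (f a) (f b) = hdist a b.
Proof.
move=> ab; apply/eqP; rewrite eqn_leq strict_incr_hdist // andbT.
have f_cle := strict_incr_cle f_incr.
have := hdist_chain (f_cle _ _ (cle_bot a)) (f_cle _ _ (cle_top a)).
have := hdist_chain (f_cle _ _ ab) (f_cle _ _ (cle_top b)).
have := strict_incr_hdist f_incr (cle_bot a).
have := strict_incr_hdist f_incr (cle_top b).
have := hdist_chain (cle_bot a) (cle_top a); have := hdist_chain ab (cle_top b).
rewrite f_bot f_top; lia.
Qed.

Lemma bot_top_preserving_adjacency : adjacency_preserving f.
Proof.
split=> // a b ab1; case: (hdist1_cle ab1) => [ab | ba].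
  by rewrite bot_top_preserving_hdist.
by rewrite hdistC bot_top_preserving_hdist // hdistC.
Qed.

End BotTopPreserving.

Lemma nonconst_strict_incr_dim p p' (mu : cube p -> cube p') :
  strict_incr mu -> (forall i, exists a b, mu a i != mu b i) ->
  p <= p' /\ (adjacency_preserving mu <-> p = p').
Proof.
move=> mu_incr mu_nonconst.
have [mu_bot mu_top] := nonconst_mono_bot_top (strict_incr_cle mu_incr) mu_nonconst.
have := strict_incr_hdist mu_incr (cle_bot (ctop p)).
rewrite mu_bot mu_top !hdist_bot_top => p_le_p'; split=> //; split=> [mu_adj | pp'].
- have := adjacency_preserving_hdist mu_adj (cle_bot (ctop p)).
  by rewrite mu_bot mu_top !hdist_bot_top => ?; apply/eqP; rewrite eqn_leq p_le_p'.
- by subst p'; exact: bot_top_preserving_adjacency.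
Qed.

Section FirstOccurrences.
Variable T : eqType.

Definition first_occ_lt (s : seq T) : rel T := fun u w => index u s < index w s.

(* Unlike [undup], which keeps last occurrences, this keeps the first ones, in order. *)
Definition undup_first (s : seq T) : seq T :=
  sort (fun u w => index u s <= index w s) (undup s).

Lemma mem_undup_first s : undup_first s =i s.
Proof. by move=> u; rewrite mem_sort mem_undup. Qed.

Lemma undup_first_uniq s : uniq (undup_first s).
Proof. by rewrite sort_uniq undup_uniq. Qed.

Lemma undup_first_sorted s : sorted (first_occ_lt s) (undup_first s).
Proof.
have index_inj : {in undup_first s &, injective (index^~ s)}.
  by move=> u w; rewrite !mem_undup_first; apply: (index_inj u).
rewrite /first_occ_lt -(sorted_map (f := index^~ s) (e' := ltn)) ltn_sorted_uniq_leq.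
rewrite (map_inj_in_uniq index_inj) undup_first_uniq sorted_map.
by apply: sort_sorted => u w; apply: leq_total.
Qed.

Lemma sorted_undup_first s t :
  t =i s -> sorted (first_occ_lt s) t -> t = undup_first s.
Proof.
move=> ts t_sorted; apply: (irr_sorted_eq (leT := first_occ_lt s)) => //.
- by move=> ? ? ?; apply: ltn_trans.
- by move=> ?; apply: ltnn.
- exact: undup_first_sorted.
- by move=> u; rewrite ts mem_undup_first.
Qed.

End FirstOccurrences.

Lemma sorted_succ_enum n : sorted (fun i j : 'I_n => val j == (val i).+1) (enum 'I_n).
Proof.
have iota_path m k : path (fun i j => j == i.+1) m (iota m.+1 k).
  by elim: k m => //= k IHk m; rewrite eqxx IHk.
have : sorted (fun i j => j == i.+1) (iota 0 n) by case: n => // n; apply: iota_path.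
by rewrite -val_enum_ord sorted_map.
Qed.

Lemma non_twisted_codom (T : eqType) p' q (g : 'I_p' -> T) (s : 'I_q -> 'I_p') :
  injective g -> (forall i, i \in codom s) ->
  (forall i j : 'I_p', val j = (val i).+1 -> index i (codom s) < index j (codom s)) ->
  codom g = undup_first (codom (g \o s)).
Proof.
move=> g_inj s_onto s_first.
have gs_map : codom (g \o s) = map g (codom s) by rewrite !codomE map_comp.
apply: sorted_undup_first => [u |].
  rewrite gs_map; apply/codomP/mapP => [[i ->] | [i _ ->]]; last by exists i.
  by exists i; rewrite ?s_onto.
rewrite gs_map [codom g]codomE sorted_map; apply: sub_sorted (sorted_succ_enum p') => i j /eqP ij.
by rewrite /relpre /first_occ_lt /= !index_map // s_first.
Qed.

Definition coord_fun m n (f : cube m -> cube n) (k : 'I_n) : {ffun cube m -> bool} :=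
  [ffun a => f a k].

Lemma cmap_coord_funP m n (f g : cmap m n) :
  (forall i, coord_fun f i = coord_fun g i) -> f = g.
Proof.
move=> fg; apply/ffunP => a; apply/ffunP => i.
by have := congr1 (fun h : {ffun cube m -> bool} => h a) (fg i); rewrite !ffunE.
Qed.

Definition nonconst m (g : {ffun cube m -> bool}) : bool := [exists a, exists b, g a != g b].

Section CanonicalDecomposition.
Variables (p r : nat) (x : cube p -> cube r).

Definition nonconst_coords : {set 'I_r} := [set k | nonconst (coord_fun x k)].

Definition canon_q := #|nonconst_coords|.

Definition canon_e (j : 'I_canon_q) : 'I_r := enum_val j.

Definition canon_funs := undup_first (codom (coord_fun x \o canon_e)).

Definition canon_p := size canon_funs.

Lemma canon_s_subproof j : index (coord_fun x (canon_e j)) canon_funs < canon_p.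
Proof. by rewrite index_mem mem_undup_first; apply: (codom_f (coord_fun x \o canon_e)). Qed.

Definition canon_s j : 'I_canon_p := Ordinal (canon_s_subproof j).

Definition canon_mu : cmap p canon_p :=
  [ffun a => [ffun i => tnth (in_tuple canon_funs) i a]].

Definition canon_phi : cmap canon_p canon_q :=
  [ffun y : cube canon_p => [ffun j => y (canon_s j)]].

(* Off the non-constant coordinates x is constant, so its value at the bottom vertex
   supplies the filling constants. *)
Definition canon_psi : cmap canon_q r :=
  [ffun y : cube canon_q =>
    [ffun k => if [pick j | canon_e j == k] is Some j then y j else x (cbot p) k]].

Definition canon_decomposition : decomposition p r :=
  existT _ canon_p (existT _ canon_q (canon_mu, canon_phi, canon_psi)).

Lemma canon_e_incr : {homo canon_e : i j / i < j}.
Proof.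
move=> i j ij; rewrite /canon_e !(enum_val_nth (canon_e i)).
have lt_trans : transitive (fun i j : 'I_r => i < j) by move=> ? ? ?; apply: ltn_trans.
by apply: (sorted_ltn_nth lt_trans _ (sorted_ltn_enum _)); rewrite // inE -cardE.
Qed.

Lemma codom_canon_e : codom canon_e =i nonconst_coords.
Proof.
move=> k; apply/codomP/idP => [[j ->] | k_nc]; first exact: enum_valP.
by exists (enum_rank_in k_nc k); rewrite /canon_e enum_rankK_in.
Qed.

Lemma const_coord a k : k \notin nonconst_coords -> x a k = x (cbot p) k.
Proof.
rewrite inE => /existsPn /(_ a) /existsPn /(_ (cbot p)).
by rewrite !ffunE negbK => /eqP.
Qed.

Lemma canon_funs_s j : tnth (in_tuple canon_funs) (canon_s j) = coord_fun x (canon_e j).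
Proof.
rewrite (tnth_nth (coord_fun x (canon_e j))) nth_index // mem_undup_first.
exact: (codom_f (coord_fun x \o canon_e)).
Qed.

Lemma canon_factor a : x a = canon_psi (canon_phi (canon_mu a)).
Proof.
apply/ffunP => k; rewrite !ffunE; case: pickP => [j /eqP <- | no_j].
  by rewrite !ffunE canon_funs_s ffunE.
rewrite const_coord // -codom_canon_e; apply/codomP => -[j kj].
by have := no_j j; rewrite kj eqxx.
Qed.

Lemma canon_psi_box : box_map (fun y => canon_psi y).
Proof.
apply: (@normal_form_box_map r canon_q _ canon_e (fun k => x (cbot p) k)).
split=> [| y j | y k k_out]; rewrite ?ffunE; first exact: canon_e_incr.
  case: pickP => [j' /eqP | /(_ j)]; last by rewrite eqxx.
  by move/(incr_ord_inj canon_e_incr) ->.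
case: pickP => // j /eqP kj; move: k_out; rewrite -kj.
by rewrite (codom_f canon_e).
Qed.

Lemma canon_funs_nonconst g : g \in canon_funs -> nonconst g.
Proof.
rewrite mem_undup_first => /codomP [j ->] /=.
by have := enum_valP j; rewrite inE.
Qed.

Lemma canon_funs_tnth_inj : injective (tnth (in_tuple canon_funs)).
Proof. exact/tuple_uniqP/undup_first_uniq. Qed.

Lemma canon_mu_good : good_mu (fun a => canon_mu a).
Proof.
split=> [i | i j ij]; last first.
  by apply: canon_funs_tnth_inj; apply/ffunP => a; have := ij a; rewrite !ffunE.
have /existsP [a /existsP [b ab]] := canon_funs_nonconst (mem_tnth i (in_tuple canon_funs)).
by exists a, b; rewrite !ffunE.
Qed.

Lemma index_canon_s i :
  index i (codom canon_s) =
  index (tnth (in_tuple canon_funs) i) (codom (coord_fun x \o canon_e)).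
Proof.
have -> : codom (coord_fun x \o canon_e) = codom (tnth (in_tuple canon_funs) \o canon_s).
  by apply: eq_codom => j; rewrite /= canon_funs_s.
by rewrite !codomE map_comp (index_map canon_funs_tnth_inj).
Qed.

Lemma canon_phi_non_twisted : non_twisted (fun y => canon_phi y).
Proof.
exists canon_s; split=> [y | i | i j ij]; first by rewrite ffunE.
  have /codomP [j gi] : tnth (in_tuple canon_funs) i \in codom (coord_fun x \o canon_e).
    by rewrite -mem_undup_first mem_tnth.
  by apply/codomP; exists j; apply: canon_funs_tnth_inj; rewrite canon_funs_s.
have first_trans : transitive (first_occ_lt (codom (coord_fun x \o canon_e))).
  by move=> ? ? ?; apply: ltn_trans.
have lt_ij : i < j by rewrite ij.
have := sorted_ltn_nth first_trans [ffun=> false]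
  (undup_first_sorted (codom (coord_fun x \o canon_e))) i j (ltn_ord i) (ltn_ord j) lt_ij.
by rewrite !index_canon_s !(tnth_nth [ffun=> false]).
Qed.

End CanonicalDecomposition.

Arguments canon_e {p r} x j.
Arguments canon_s {p r} x j.

Lemma coord_fun_canon_mu p r (x : cube p -> cube r) i :
  coord_fun (canon_mu x) i = tnth (in_tuple (canon_funs x)) i.
Proof. by apply/ffunP => a; rewrite !ffunE. Qed.

Lemma strict_incr_factor p p' r (x : cube p -> cube r) (mu : cube p -> cube p') G :
  strict_incr x -> (forall a, x a = G (mu a)) ->
  (forall i, exists k, forall a, mu a i = x a k) -> strict_incr mu.
Proof.
move=> x_incr x_eq mu_coord a b /x_incr /andP [/cleP xab x_ne]; apply/andP; split.
  by apply/cleP => i; have [k mu_k] := mu_coord i; rewrite !mu_k; apply: xab.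
by apply: contraNneq x_ne => mu_ab; rewrite !x_eq mu_ab.
Qed.

Section DecompositionData.
Variables (p r p' q : nat) (x : cube p -> cube r).
Variables (mu : cube p -> cube p') (phi : cube p' -> cube q) (psi : cube q -> cube r).
Variables (e : 'I_q -> 'I_r) (v : 'I_r -> bool) (s : 'I_q -> 'I_p').
Hypotheses (x_eq : forall a, x a = psi (phi (mu a))) (psi_nf : box_normal_form psi e v).
Hypotheses (phi_s : forall y, phi y = [ffun k => y (s k)]) (s_onto : forall i, i \in codom s).
Hypothesis s_first :
  forall i j : 'I_p', val j = (val i).+1 -> index i (codom s) < index j (codom s).
Hypothesis mu_good : good_mu mu.

Lemma decomp_coord_on a j : x a (e j) = mu a (s j).
Proof. by case: psi_nf => _ psi_e _; rewrite x_eq psi_e phi_s ffunE. Qed.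

Lemma decomp_mu_coord i : exists k, forall a, mu a i = x a k.
Proof. by have /codomP [j ->] := s_onto i; exists (e j) => a; rewrite decomp_coord_on. Qed.

Lemma decomp_coord_off a k : k \notin codom e -> x a k = v k.
Proof. by case: psi_nf => _ _ psi_v; rewrite x_eq; apply: psi_v. Qed.

Lemma decomp_nonconst_coords : codom e =i nonconst_coords x.
Proof.
case: mu_good => mu_nonconst _ k; rewrite inE; apply/idP/idP => [/codomP [j ->] | ].
  have [a [b ab]] := mu_nonconst (s j).
  by apply/existsP; exists a; apply/existsP; exists b; rewrite !ffunE !decomp_coord_on.
apply: contraLR => k_out; apply/existsPn => a; apply/existsPn => b.
by rewrite !ffunE !decomp_coord_off // eqxx.
Qed.

Lemma decomp_enum_nonconst : map e (enum 'I_q) = enum (nonconst_coords x).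
Proof.
case: psi_nf => e_incr _ _.
by rewrite map_incr_enum // (eq_enum decomp_nonconst_coords).
Qed.

Lemma decomp_coord_fun_inj : injective (coord_fun mu).
Proof.
case: mu_good => _ mu_inj i j ij; apply: mu_inj => a.
by have := congr1 (fun g : {ffun cube p -> bool} => g a) ij; rewrite !ffunE.
Qed.

Lemma decomp_coord_funs : codom (coord_fun mu) = undup_first (codom (coord_fun x \o e)).
Proof.
rewrite (non_twisted_codom decomp_coord_fun_inj s_onto s_first); congr undup_first.
by apply: eq_codom => j; apply/ffunP => a; rewrite !ffunE decomp_coord_on.
Qed.

End DecompositionData.

Lemma canon_decomposition_spec p r (x : cube p -> cube r) :
  is_decomposition x (canon_decomposition x).
Proof.
split; [exact: canon_factor | exact: canon_phi_non_twisted | exact: canon_psi_box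
       | exact: canon_mu_good].
Qed.

Lemma canon_decomposition_unique p r (x : cube p -> cube r) d :
  is_decomposition x d -> d = canon_decomposition x.
Proof.
case: d => p' [q [[mu phi] psi]] [x_eq phi_nt psi_box mu_good].
have [e [v psi_nf]] := box_map_normal_form psi_box.
have [_ psi_e psi_v] := psi_nf.
have [s [phi_s s_onto s_first]] := phi_nt.
have e_enum := decomp_enum_nonconst x_eq psi_nf phi_s mu_good.
have q_eq : q = canon_q x by rewrite /canon_q cardE -e_enum size_map size_enum_ord.
subst q.
have e_eq j : e j = canon_e x j.
  by rewrite /canon_e (enum_val_nth (e j)) -e_enum (nth_map j) ?size_enum_ord ?nth_ord_enum.
have psi_eq : psi = canon_psi x.
  apply/ffunP => y; apply/ffunP => k; rewrite !ffunE; case: pickP => [j /eqP <- | no_j].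
    by rewrite -e_eq psi_e.
  have k_out : k \notin codom e.
    by apply/codomP => -[j]; rewrite e_eq => kj; have := no_j j; rewrite kj eqxx.
  by rewrite psi_v // (decomp_coord_off x_eq psi_nf).
have mu_funs : codom (coord_fun mu) = canon_funs x.
  rewrite (decomp_coord_funs x_eq psi_nf phi_s s_onto s_first mu_good).
  by congr undup_first; apply: eq_codom => j; rewrite /= e_eq.
have p_eq : p' = canon_p x by rewrite /canon_p -mu_funs size_codom card_ord.
subst p'.
have coord_mu i : coord_fun mu i = tnth (in_tuple (canon_funs x)) i.
  have := congr1 (nth [ffun=> false] ^~ i) mu_funs.
  by rewrite codomE (nth_map i) ?size_enum_ord // nth_ord_enum (tnth_nth [ffun=> false]).
have mu_eq : mu = canon_mu x.
  by apply: cmap_coord_funP => i; rewrite coord_mu coord_fun_canon_mu.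
have s_eq j : s j = canon_s x j.
  have x_mu : coord_fun x (e j) = coord_fun mu (s j).
    by apply/ffunP => a; rewrite !ffunE (decomp_coord_on x_eq psi_nf phi_s).
  apply: val_inj; rewrite /= -e_eq x_mu -mu_funs codomE.
  by rewrite (index_map (decomp_coord_fun_inj mu_good)) index_enum_ord.
have phi_eq : phi = canon_phi x.
  by apply/ffunP => y; rewrite phi_s !ffunE; apply/ffunP => j; rewrite !ffunE s_eq.
by rewrite mu_eq phi_eq psi_eq.
Qed.

Lemma decomposition_extra_strict_incr p r (x : cube p -> cube r) d :
  strict_incr x -> is_decomposition x d -> decomposition_extra d.
Proof.
case: d => p' [q [[mu phi] psi]] x_incr [x_eq phi_nt psi_box mu_good].
have [e [v psi_nf]] := box_map_normal_form psi_box.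
have [s [phi_s s_onto _]] := phi_nt.
have mu_incr : strict_incr mu.
  exact: (strict_incr_factor (G := fun y => psi (phi y))) x_incr x_eq
    (decomp_mu_coord x_eq psi_nf phi_s s_onto).
have [p_le_p' mu_adj] := nonconst_strict_incr_dim mu_incr (proj1 mu_good).
by split.
Qed.

Theorem proposition8p4 (p r : nat) (x : cube p -> cube r) :
  strict_incr x ->
  (exists! d : decomposition p r, is_decomposition x d) /\
  (forall d : decomposition p r, is_decomposition x d -> decomposition_extra d).
Proof.
move=> x_incr; split; last by move=> d; apply: decomposition_extra_strict_incr.
exists (canon_decomposition x); split; first exact: canon_decomposition_spec.
by move=> d /canon_decomposition_unique ->.
Qed.
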